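(* Let $X$ be a compact metric space and $T:X\to X$ a surjective local homeomorphism such that $Sp_l(X,T)$ is finite and consists of isolated points of $X$. Then \[{\rm dad}(\mathcal{G}_{(X,T)})\le 2\,{\rm dim}_{\rm Rok}(X,T)+1.\]
   Context: $Sp_l(X,T)=\{x:|T^{-1}(\{x\})|\ge2\}$. $\mathcal{G}_{(X,T)}=\{(x,m-n,y): T^m(x)=T^n(y), m,n\in\mathbb{N}\}$ is the Deaconu–Renault groupoid (unit space $X$, $r(x,k,y)=x$, $s(x,k,y)=y$, standard étale topology). ${\rm dad}(\mathcal{G})$: least $d$ such that for every open relatively compact $K\subseteq\mathcal{G}$ there are open $U_0,\dots,U_d\subseteq\mathcal{G}^{(0)}$ covering $s(K)\cup r(K)$ with each $\{g\in K:s(g),r(g)\in U_i\}$ contained in a relatively compact subgroupoid. ${\rm dim}_{\rm Rok}(X,T)$: least $d$ such that for every $N\ge1$, $X$ is covered by the members of at most $d+1$ open $N$-Rokhlin towers, where an open $N$-Rokhlin tower is $\{U_0,\dots,U_{N-1}\}$ of nonempty open sets with $U_k=T^{-1}(U_{k-1})$ and pairwise disjoint closures. *)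

From HB Require Import structures.
From mathcomp Require Import all_boot all_order all_algebra.
From mathcomp Require Import all_classical all_reals all_analysis.

Set Implicit Arguments.
Unset Strict Implicit.
Unset Printing Implicit Defensive.
Import Order.TTheory GRing.Theory Num.Theory.
Local Open Scope classical_set_scope.

Section DR.
Variable X : topologicalType.

(** Local homeomorphism: continuous, and every point has an open
    neighbourhood on which T is injective and open (hence a homeomorphism
    onto an open image). *)
Definition local_homeomorphism (T : X -> X) : Prop :=
  continuous T /\
  forall x : X, exists U : set X,
    [/\ open U, U x, {in U &, injective T} &
        forall V : set X, open V -> V `<=` U -> open (T @` V)].

Definition Sp_l (T : X -> X) : set X :=
  [set x | exists y1 y2 : X, [/\ y1 <> y2, T y1 = x & T y2 = x]].

Definition gr (g : X * int * X) : X := g.1.1.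
Definition gs (g : X * int * X) : X := g.2.
Definition gdeg (g : X * int * X) : int := g.1.2.

Definition DRgroupoid (T : X -> X) : set (X * int * X) :=
  [set g | exists m n : nat,
     gdeg g = (m%:Z - n%:Z)%R /\ iter m T (gr g) = iter n T (gs g)].

Definition DRbasic (T : X -> X) (U : set X) (m n : nat) (V : set X)
  : set (X * int * X) :=
  [set g | [/\ U (gr g), V (gs g), gdeg g = (m%:Z - n%:Z)%R &
              iter m T (gr g) = iter n T (gs g)]].

Definition Gopen (T : X -> X) (A : set (X * int * X)) : Prop :=
  forall g, A g -> exists (U V : set X) (m n : nat),
    [/\ open U, open V, DRbasic T U m n V g & DRbasic T U m n V `<=` A].

Definition Gclosure (T : X -> X) (A : set (X * int * X)) : set (X * int * X) :=
  [set g | DRgroupoid T g /\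
     forall B, Gopen T B -> B g -> exists h, B h /\ A h].

Definition Gcompact (T : X -> X) (C : set (X * int * X)) : Prop :=
  C `<=` DRgroupoid T /\
  forall (I : Type) (F : I -> set (X * int * X)),
    (forall i, Gopen T (F i)) -> C `<=` \bigcup_i F i ->
    exists D : set I, finite_set D /\ C `<=` \bigcup_(i in D) F i.

Definition Grelcompact (T : X -> X) (A : set (X * int * X)) : Prop :=
  Gcompact T (Gclosure T A).

Definition subgroupoid (T : X -> X) (H : set (X * int * X)) : Prop :=
  [/\ H `<=` DRgroupoid T,
      (forall x k y l z, H (x, k, y) -> H (y, l, z) -> H (x, (k + l)%R, z)) &
      (forall x k y, H (x, k, y) -> H (y, (- k)%R, x))].

Definition dad_le (T : X -> X) (d : nat) : Prop :=
  forall K : set (X * int * X), K `<=` DRgroupoid T ->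
    Gopen T K -> Grelcompact T K ->
    exists U : nat -> set X,
      [/\ (forall i, (i <= d)%N -> open (U i)),
          (forall x, (gs @` K `|` gr @` K) x -> exists i, (i <= d)%N /\ U i x) &
          (forall i, (i <= d)%N -> exists H : set (X * int * X),
             [/\ subgroupoid T H, Grelcompact T H &
                 [set g | K g /\ U i (gs g) /\ U i (gr g)] `<=` H])].

Definition open_Rokhlin_tower (T : X -> X) (N : nat) (U : nat -> set X) : Prop :=
  [/\ (forall k, (k < N)%N -> open (U k) /\ U k !=set0),
      (forall k, (k.+1 < N)%N -> U k.+1 = T @^-1` (U k)) &
      (forall i j, (i < N)%N -> (j < N)%N -> i <> j ->
         closure (U i) `&` closure (U j) = set0)].

Definition dimRok_le (T : X -> X) (d : nat) : Prop :=
  forall N : nat, (1 <= N)%N ->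
    exists (p : nat) (tow : nat -> nat -> set X),
      [/\ (p <= d.+1)%N,
          (forall j, (j < p)%N -> open_Rokhlin_tower T N (tow j)) &
          (forall x : X, exists j k, [/\ (j < p)%N, (k < N)%N & tow j k x])].

End DR.

From HB Require Import structures.
From mathcomp Require Import all_boot all_order all_algebra.
From mathcomp Require Import all_classical all_reals all_analysis.
From mathcomp Require Import zify finmap.
Set Implicit Arguments.
Unset Strict Implicit.
Unset Printing Implicit Defensive.
Import Order.TTheory GRing.Theory Num.Theory.
Local Open Scope classical_set_scope.

(* If K is open and relatively compact, compactness of its closure bounds the
   lags: every arrow of K is (x, a - b, y) with T^a x = T^b y and a, b <= M.
   Cover X by at most d + 1 open Rokhlin towers of height 2M + 1 and cut each
   into its lower half (levels <= M) and its upper half (levels >= M), giving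
   2d + 2 open sets. An arrow of K inside an upper half moves both endpoints
   down by at most M levels, so it stays in the tower and belongs to the tower
   groupoid {(x, k - l, y) : x at level k, y at level l, T^(k+M) x = T^(l+M) y},
   whose closure is compact. Inside a lower half the same holds unless the two
   orbits are glued by T before reaching the base, which needs a point of
   Sp_l(X,T) within M steps; since T^j has finite fibres, such exceptional
   endpoints, and the arrows between them, are finitely many. *)

Lemma open_setX {X Y : topologicalType} (U : set X) (V : set Y) :
  open U -> open V -> open (U `*` V).
Proof.
move=> oU oV; rewrite openE => p [Up Vp].
by exists (U, V) => //=; split; apply: open_nbhs_nbhs.
Qed.

Lemma hausdorff_open_disjoint {X : topologicalType} (x y : X) :
  hausdorff_space X -> x <> y ->
  exists A B : set X, [/\ open A, open B, A x, B y & forall z, A z -> ~ B z].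
Proof.
rewrite open_hausdorff => hX /eqP /hX [[A B]].
rewrite !in_setE /= => -[Ax By] [oA oB AB].
exists A, B; split => // z Az Bz.
by have : (A `&` B) z by []; rewrite AB.
Qed.

(* compact_cover is only available for pointed spaces; any point of Y will do. *)
Section PointedAlias.
Context {Y : topologicalType} (y0 : Y).
Let pointed_at : Type := Y.
HB.instance Definition _ := Topological.on pointed_at.
HB.instance Definition _ := isPointed.Build pointed_at y0.

Lemma compact_cover_compact (A : set Y) : compact A -> cover_compact A.
Proof. by move=> cA; have : @compact pointed_at A := cA; rewrite compact_cover. Qed.
End PointedAlias.

Lemma compact_finite_subcover {Y : topologicalType} (A : set Y) (f : Y -> set Y) :
  compact A -> (forall p, A p -> open (f p)) -> (forall p, A p -> f p p) ->
  exists S : set Y, [/\ finite_set S, S `<=` A & A `<=` \bigcup_(p in S) f p].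
Proof.
move=> cA op fpp; have [[y0 _]|A0] := pselect (A !=set0); last first.
  by exists set0; split => // p Ap; exfalso; apply: A0; exists p.
have [D sDA cD] : finite_subset_cover A f A.
  by apply: (compact_cover_compact y0 cA) => // p Ap; exists p => //; apply: fpp.
exists [set` D]; split => [|p /sDA|]; [exact: finite_fset | by rewrite in_setE | exact: cD].
Qed.

Section LocalHomeomorphism.
Context {X : topologicalType} (T : X -> X).
Hypothesis lhT : local_homeomorphism T.

Lemma continuous_iter n : continuous (iter n T).
Proof.
elim: n => [|n IH] x; first exact: cvg_id.
by apply: continuous_comp; [exact: IH | exact: lhT.1].
Qed.

Lemma open_preimage_iter n U : open U -> open (iter n T @^-1` U).
Proof. by move=> oU; apply: open_comp => // x _; apply: continuous_iter. Qed.

Lemma iter_locally_injective n z : exists W : set X,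
  [/\ open W, W z & {in W &, injective (iter n T)}].
Proof.
elim: n z => [|n IH] z; first by exists setT; split => //; exact: openT.
have [W [oW Wz iW]] := IH z.
have [U [oU Uz iU _]] := lhT.2 (iter n T z).
exists (W `&` iter n T @^-1` U); split.
- by apply: openI => //; apply: open_preimage_iter.
- by [].
move=> a b; rewrite !in_setE => -[Wa Ua] [Wb Ub] /= e.
by apply: iW; rewrite ?in_setE //; apply: iU; rewrite ?in_setE.
Qed.

(* Near a solution of T^m1 x = T^n1 y, the equation T^(j+m1) x' = T^(j+n1) y'
   forces T^m1 x' = T^n1 y', because T^j is injective near T^m1 x. *)
Lemma iter_eq_cancel_locally (U1 V1 : set X) m1 n1 m2 n2 x y :
  open U1 -> open V1 -> U1 x -> V1 y -> iter m1 T x = iter n1 T y ->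
  (m1 <= m2)%N -> (m1 + n2 = m2 + n1)%N ->
  exists U V : set X, [/\ open U, open V, U x & V y] /\ [/\
     U `<=` U1, V `<=` V1 &
     forall x' y', U x' -> V y' -> iter m2 T x' = iter n2 T y' ->
        iter m1 T x' = iter n1 T y'].
Proof.
move=> oU1 oV1 U1x V1y e lem e2.
pose j := (m2 - m1)%N.
have [-> ->] : m2 = (j + m1)%N /\ n2 = (j + n1)%N by rewrite /j; lia.
have [W [oW Wz iW]] := iter_locally_injective j (iter m1 T x).
exists (U1 `&` iter m1 T @^-1` W), (V1 `&` iter n1 T @^-1` W); split; split.
- by apply: openI => //; apply: open_preimage_iter.
- by apply: openI => //; apply: open_preimage_iter.
- by [].
- by split => //=; rewrite -e.
- by move=> ? [].
- by move=> ? [].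
move=> x' y' [_ Wx] [_ Wy]; rewrite !iterD => ee.
by apply: iW; rewrite ?in_setE.
Qed.

End LocalHomeomorphism.

Section EtaleTopology.
Context {X : topologicalType} (T : X -> X).
Hypothesis hX : hausdorff_space X.
Hypothesis lhT : local_homeomorphism T.

Local Notation G := (DRgroupoid T).

Definition Gclosed (C : set (X * int * X)) := forall g, G g -> ~ C g ->
  exists B, [/\ Gopen T B, B g & forall h, B h -> ~ C h].

Lemma DRbasic_sub U V m n : DRbasic T U m n V `<=` G.
Proof. by move=> g [_ _ e1 e2]; exists m, n. Qed.

Lemma Gopen_DRbasic U V m n : open U -> open V -> Gopen T (DRbasic T U m n V).
Proof. by move=> oU oV g bg; exists U, V, m, n; split. Qed.

Lemma DRbasic_meet g U1 V1 m1 n1 U2 V2 m2 n2 :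
  open U1 -> open V1 -> open U2 -> open V2 ->
  DRbasic T U1 m1 n1 V1 g -> DRbasic T U2 m2 n2 V2 g -> (m1 <= m2)%N ->
  exists U V, [/\ open U, open V & DRbasic T U m2 n2 V g] /\
    DRbasic T U m2 n2 V `<=` DRbasic T U1 m1 n1 V1 `&` DRbasic T U2 m2 n2 V2.
Proof.
move=> oU1 oV1 oU2 oV2 [u1 v1 d1 e1] [u2 v2 d2 e2] le.
have hmn : (m1 + n2 = m2 + n1)%N.
  have : (m1%:Z - n1%:Z = m2%:Z - n2%:Z)%R by rewrite -d1 -d2.
  by lia.
have [U [V [[oU oV Ux Vy] [sU sV imp]]]] :=
  iter_eq_cancel_locally lhT oU1 oV1 u1 v1 e1 le hmn.
exists (U `&` U2), (V `&` V2); split; first by split => //; exact: openI.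
move=> h [[Uh U2h] [Vh V2h] dh eh]; do 2 split => //.
- exact: sU.
- exact: sV.
- by rewrite dh; apply/eqP; rewrite subr_eq; apply/eqP; lia.
- exact: imp.
Qed.

Lemma GopenI B1 B2 : Gopen T B1 -> Gopen T B2 -> Gopen T (B1 `&` B2).
Proof.
move=> op1 op2 g [b1 b2].
have [U1 [V1 [m1 [n1 [oU1 oV1 g1 s1]]]]] := op1 g b1.
have [U2 [V2 [m2 [n2 [oU2 oV2 g2 s2]]]]] := op2 g b2.
case: (leqP m1 m2) => le.
  have [U [V [[oU oV gU] sUV]]] := DRbasic_meet oU1 oV1 oU2 oV2 g1 g2 le.
  by exists U, V, m2, n2; split => // h /sUV [/s1 ? /s2 ?].
have [U [V [[oU oV gU] sUV]]] := DRbasic_meet oU2 oV2 oU1 oV1 g2 g1 (ltnW le).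
by exists U, V, m1, n1; split => // h /sUV [/s2 ? /s1 ?].
Qed.

Lemma Gclosed0 : Gclosed set0.
Proof.
move=> g [m [n [d e]]] _; exists (DRbasic T setT m n setT).
split; [exact: Gopen_DRbasic openT openT | exact: And4 | by move=> h _ []].
Qed.

Lemma Gclosed_DRbasic A B m n : closed A -> closed B -> Gclosed (DRbasic T A m n B).
Proof.
move=> cA cB g [m0 [n0 [d0 e0]]] nb.
have oCA : open (~` A) by rewrite openC.
have oCB : open (~` B) by rewrite openC.
have [Ag|nAg] := pselect (A (gr g)); last first.
  exists (DRbasic T (~` A) m0 n0 setT).
  by split; [exact: Gopen_DRbasic oCA openT | split | move=> h [? _ _ _] []].
have [Bg|nBg] := pselect (B (gs g)); last first.
  exists (DRbasic T setT m0 n0 (~` B)).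
  by split; [exact: Gopen_DRbasic openT oCB | split | move=> h [_ ? _ _] []].
have [dg|ndg] := pselect (gdeg g = (m%:Z - n%:Z)%R); last first.
  exists (DRbasic T setT m0 n0 setT).
  split; [exact: Gopen_DRbasic openT openT | by split | ].
  by move=> h [_ _ dh _] [_ _ dh' _]; apply: ndg; rewrite d0 -dh dh'.
have ne : iter m T (gr g) <> iter n T (gs g) by move=> e; apply: nb.
have [Wa [Wb [oWa oWb Wa1 Wb1 dis]]] := hausdorff_open_disjoint hX ne.
exists (DRbasic T (iter m T @^-1` Wa) m0 n0 (iter n T @^-1` Wb)); split.
- by apply: Gopen_DRbasic; apply: open_preimage_iter.
- by split.
- by move=> h [ha hb _ _] [_ _ _ eh]; apply: (dis _ ha); rewrite eh.
Qed.

Lemma GclosedU C1 C2 : Gclosed C1 -> Gclosed C2 -> Gclosed (C1 `|` C2).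
Proof.
move=> c1 c2 g Gg n12.
have [B1 [op1 b1 h1]] := c1 g Gg (fun c => n12 (or_introl c)).
have [B2 [op2 b2 h2]] := c2 g Gg (fun c => n12 (or_intror c)).
exists (B1 `&` B2); split; [exact: GopenI | by [] | ].
by move=> h [/h1 ? /h2 ?] [].
Qed.

Lemma Gcompact0 : Gcompact T set0.
Proof. by split => // I F _ _; exists set0; split. Qed.

Lemma GcompactU C1 C2 : Gcompact T C1 -> Gcompact T C2 -> Gcompact T (C1 `|` C2).
Proof.
move=> [s1 c1] [s2 c2]; split; first by move=> g [/s1|/s2].
move=> I F oF cov.
have [D1 [f1 sub1]] := c1 I F oF (fun g h => cov g (or_introl h)).
have [D2 [f2 sub2]] := c2 I F oF (fun g h => cov g (or_intror h)).
exists (D1 `|` D2); split; first by rewrite finite_setU.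
by move=> g [/sub1|/sub2] [i Di Fi]; exists i => //; [left|right].
Qed.

Lemma closed_iter_coincidence A B m n : closed A -> closed B ->
  closed [set p : X * X | [/\ A p.1, B p.2 & iter m T p.1 = iter n T p.2]].
Proof.
move=> cA cB; rewrite -[X in closed X]setCK closedC openE => p np.
have oCA : open (~` A) by rewrite openC.
have oCB : open (~` B) by rewrite openC.
have [Ap|nAp] := pselect (A p.1); last first.
  apply: (@filterS _ _ _ (~` A `*` setT)); first by move=> q [? _] [].
  by apply: open_nbhs_nbhs; split => //; apply: open_setX => //; exact: openT.
have [Bp|nBp] := pselect (B p.2); last first.
  apply: (@filterS _ _ _ (setT `*` ~` B)); first by move=> q [_ ?] [].
  by apply: open_nbhs_nbhs; split => //; apply: open_setX => //; exact: openT.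
have ne : iter m T p.1 <> iter n T p.2 by move=> e; apply: np.
have [Wa [Wb [oWa oWb Wa1 Wb1 dis]]] := hausdorff_open_disjoint hX ne.
apply: (@filterS _ _ _ ((iter m T @^-1` Wa) `*` (iter n T @^-1` Wb))).
  by move=> q [qa qb] [_ _ e]; apply: (dis _ qa); rewrite e.
apply: open_nbhs_nbhs; split => //.
by apply: open_setX; apply: open_preimage_iter.
Qed.

Lemma DRbasic_refine_locally U V m' n' m n x y :
  open U -> open V -> DRbasic T U m' n' V (x, (m%:Z - n%:Z)%R, y) ->
  exists W : set (X * X), [/\ open W, W (x, y) &
    forall x' y', W (x', y') -> iter m T x' = iter n T y' ->
      DRbasic T U m' n' V (x', (m%:Z - n%:Z)%R, y')].
Proof.
move=> oU oV [Ux Vy dp ep]; rewrite /gdeg /= in dp.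
have hmn : (m' + n = m + n')%N.
  have : (m'%:Z - n'%:Z = m%:Z - n%:Z)%R by rewrite -dp.
  by lia.
have [le|lt] := leqP m' m.
  have [U'' [V'' [[oU'' oV'' Ux'' Vy''] [sU sV imp]]]] :=
    iter_eq_cancel_locally lhT oU oV Ux Vy ep le hmn.
  exists (U'' `*` V''); split => [||x' y' [/= x'U y'V] e]; first exact: open_setX.
    by [].
  by split => //; [exact: sU | exact: sV | exact: imp].
exists (U `*` V); split => [||x' y' [/= x'U y'V] e]; first exact: open_setX.
  by [].
split => //; pose j := (m' - m)%N.
have [-> ->] : m' = (j + m)%N /\ n' = (j + n)%N by rewrite /j; lia.
by rewrite !iterD /= e.
Qed.

Lemma Gcompact_DRbasic A B m n : compact [set: X] -> closed A -> closed B ->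
  Gcompact T (DRbasic T A m n B).
Proof.
move=> cX cA cB; split; first exact: DRbasic_sub.
move=> I F oF cov.
pose P := [set p : X * X | [/\ A p.1, B p.2 & iter m T p.1 = iter n T p.2]].
have cP : compact P.
  apply: (@subclosed_compact _ _ ([set: X] `*` [set: X])) => //.
  - exact: closed_iter_coincidence.
  - exact: compact_setX.
pose covering (p : X * X) (iW : option I * set (X * X)) :=
  P p -> exists i, [/\ iW.1 = Some i, open iW.2, iW.2 p &
     forall q, iW.2 q -> P q -> F i (q.1, (m%:Z - n%:Z)%R, q.2)].
have /choice [cv Hcv] : forall p, exists iW, covering p iW.
  move=> [x y]; have [[Ax By exy]|nPp] := pselect (P (x, y)); last first.
    by exists (None, set0).
  have [i _ Fi] := cov (x, (m%:Z - n%:Z)%R, y) (And4 Ax By erefl exy).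
  have [U [V [m' [n' [oU oV bp sF]]]]] := oF i _ Fi.
  have [W [oW Wp HW]] := DRbasic_refine_locally oU oV bp.
  exists (Some i, W) => _; exists i; split => // -[x' y'] Wq [_ _ e].
  exact/sF/HW.
have [S [fS sSP covS]] : exists S, [/\ finite_set S, S `<=` P &
    P `<=` \bigcup_(p in S) (cv p).2].
  by apply: compact_finite_subcover => // p /Hcv [i []].
exists (Some @^-1` ((fun p => (cv p).1) @` S)); split.
  by apply: finite_preimage; [move=> a b _ _ [] | exact: finite_image].
move=> [[x c] y] [/= Ax By dc exy].
have /covS [p Sp cvp] : P (x, y) by [].
have [i [e1 _ _ Fi]] := Hcv p (sSP _ Sp).
by exists i; [exists p | rewrite /gdeg /= in dc; rewrite dc; apply: (Fi (x, y))].
Qed.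

Lemma Gcompact_Gclosed_sub C D : Gcompact T C -> Gclosed D -> D `<=` C ->
  Gcompact T D.
Proof.
move=> [sC cC] clD sDC; split; first by move=> g /sDC /sC.
move=> I F oF cov.
pose avoiding g B := [/\ Gopen T B, (forall h, B h -> ~ D h) & (C g -> ~ D g -> B g)].
have /choice [fB HfB] : forall g, exists B, avoiding g B.
  move=> g; have [[Cg nDg]|nn] := pselect (C g /\ ~ D g); last first.
    by exists set0; split => // Cg nDg; exfalso; apply: nn.
  by have [B [oB Bg hB]] := clD g (sC _ Cg) nDg; exists B.
pose F' (s : I + (X * int * X)) := match s with inl i => F i | inr g => fB g end.
have oF' : forall s, Gopen T (F' s) by case => [i|g] //=; case: (HfB g).
have covC : C `<=` \bigcup_s F' s.
  move=> g Cg; have [Dg|nDg] := pselect (D g).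
    by have [i _ Fi] := cov g Dg; exists (inl i).
  by exists (inr g) => //; case: (HfB g) => _ _; apply.
have [D' [fD' sub]] := cC _ F' oF' covC.
exists (inl @^-1` D'); split; first by apply: finite_preimage => // a b _ _ [].
move=> g Dg; have [[i|h] D'i Fi] := sub g (sDC _ Dg); first by exists i.
by exfalso; case: (HfB h) => _ nD _; apply: (nD g Fi Dg).
Qed.

Lemma Gclosed_closure H : Gclosed (Gclosure T H).
Proof.
move=> g Gg nCl; apply: contrapT => nB; apply: nCl; split => // B oB Bg.
apply: contrapT => nh; apply: nB; exists B; split => // h Bh [Gh hB].
by have [h' [Bh' Hh']] := hB B oB Bh; apply: nh; exists h'.
Qed.

Lemma Gclosure_min H C : Gclosed C -> H `<=` C -> Gclosure T H `<=` C.
Proof.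
move=> cC sHC g [Gg hg]; apply: contrapT => nC.
have [B [oB Bg nB]] := cC g Gg nC.
by have [h [Bh Hh]] := hg B oB Bg; apply: (nB h Bh (sHC _ Hh)).
Qed.

Definition Gcompact_closed C := Gcompact T C /\ Gclosed C.

Lemma Grelcompact_sub H C : Gcompact_closed C -> H `<=` C -> Grelcompact T H.
Proof.
move=> [cC clC] sHC.
exact: (Gcompact_Gclosed_sub cC (@Gclosed_closure H) (Gclosure_min clC sHC)).
Qed.

Lemma Gcompact_closedU A B :
  Gcompact_closed A -> Gcompact_closed B -> Gcompact_closed (A `|` B).
Proof. by move=> [? ?] [? ?]; split; [exact: GcompactU | exact: GclosedU]. Qed.

Lemma Gcompact_closed_bigcup (I : eqType) (D : set I) (F : I -> set (X * int * X)) :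
  finite_set D -> (forall i, D i -> Gcompact_closed (F i)) ->
  Gcompact_closed (\bigcup_(i in D) F i).
Proof.
move=> /finite_seqP [s ->]; elim: s => [|a s IH] hF.
  by rewrite set_nil bigcup_set0; split; [exact: Gcompact0 | exact: Gclosed0].
have -> : [set` a :: s] = a |` [set` s].
  by apply/predeqP => i /=; rewrite in_cons; split => [/orP[/eqP|]|[->|->]];
    [left | right | rewrite eqxx | rewrite orbT].
rewrite bigcup_setU1; apply: Gcompact_closedU; first by apply: hF; rewrite /= mem_head.
by apply: IH => i si; apply: hF; rewrite /= in_cons si orbT.
Qed.

End EtaleTopology.

Lemma iter_comm {A : Type} (f : A -> A) a b x :
  iter a f (iter b f x) = iter b f (iter a f x).
Proof. by rewrite -!iterD addnC. Qed.

Section Dynamics.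
Context {X : topologicalType} (T : X -> X).

Local Notation G := (DRgroupoid T).

Lemma Rokhlin_tower_iter N U k a x : open_Rokhlin_tower T N U ->
  (k + a < N)%N -> U (k + a)%N x <-> U k (iter a T x).
Proof.
move=> [_ UT _]; elim: a x => [|a IH] x h; first by rewrite addn0.
rewrite addnS (UT (k + a)%N); last by lia.
by rewrite /preimage /= (IH (T x)); [rewrite -iterSr | lia].
Qed.

Lemma Rokhlin_tower_level_unique N U i j x : open_Rokhlin_tower T N U ->
  (i < N)%N -> (j < N)%N -> U i x -> U j x -> i = j.
Proof.
move=> [_ _ dis] iN jN Ui Uj; apply: contrapT => ij.
have : (closure (U i) `&` closure (U j)) x by split; apply: subset_closure.
by rewrite dis.
Qed.

(* A tower of height t+1 through x would contain both x and T^t x at the same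
   level if T^t x = x. *)
Lemma dimRok_aperiodic d x t : dimRok_le T d -> (0 < t)%N -> iter t T x <> x.
Proof.
move=> dR t0 per.
have [p [tow [_ tws cv]]] := dR t.+1 isT.
have [j [k [jp kN twk]]] := cv x.
have TW := tws j jp.
have q0 : tow j 0%N (iter k T x) := (Rokhlin_tower_iter (k := 0) x TW kN).1 twk.
have qt : tow j t (iter k T x).
  by apply: (Rokhlin_tower_iter (k := 0) (iter k T x) TW (ltnSn t)).2; rewrite iter_comm per.
have := Rokhlin_tower_level_unique TW (ltn0Sn t) (ltnSn t) q0 qt; lia.
Qed.

Lemma dimRok_iter_inj d x a b : dimRok_le T d ->
  iter a T x = iter b T x -> a = b.
Proof.
move=> dR; wlog le : a b / (a <= b)%N.
  by move=> H e; case: (leqP a b) => ab; [exact: H | apply/esym/H => //; exact: ltnW].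
move=> e; apply: contrapT => ne.
apply: (dimRok_aperiodic (x := iter a T x) (t := (b - a)%N) dR); first by lia.
by rewrite -iterD subnK.
Qed.

Lemma DRgroupoid_comp x k y l z :
  G (x, k, y) -> G (y, l, z) -> G (x, (k + l)%R, z).
Proof.
move=> [m [n [dk ek]]] [m' [n' [dl el]]].
rewrite /gdeg /gr /gs /= in dk ek dl el.
exists (m + m')%N, (n + n')%N; rewrite /gdeg /gr /gs /=.
by split; [rewrite dk dl; lia | rewrite addnC iterD ek iter_comm el -iterD].
Qed.

Lemma DRgroupoid_inv x k y : G (x, k, y) -> G (y, (- k)%R, x).
Proof.
move=> [m [n [dk ek]]]; rewrite /gdeg /gr /gs /= in dk ek.
by exists n, m; rewrite /gdeg /gr /gs /=; split; [rewrite dk; lia | rewrite ek].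
Qed.

Lemma DRgroupoid_lag_unique d x c c' y : dimRok_le T d ->
  G (x, c, y) -> G (x, c', y) -> c = c'.
Proof.
move=> dR [m [n [dk ek]]] [m' [n' [dk' ek']]].
rewrite /gdeg /gr /gs /= in dk ek dk' ek'.
have /(dimRok_iter_inj dR) : iter (m + n')%N T x = iter (n + m')%N T x.
  by rewrite addnC iterD ek iter_comm -ek' -iterD.
by rewrite dk dk'; lia.
Qed.

Lemma iter_first_collision a w u : iter a T w = iter a T u -> w <> u ->
  exists i, [/\ (i < a)%N, iter i T w <> iter i T u & T (iter i T w) = T (iter i T u)].
Proof.
elim: a => [|a IH] //= e ne.
have [ea|nea] := pselect (iter a T w = iter a T u); last by exists a.
by have [i [ia ni ei]] := IH ea ne; exists i; split => //; lia.
Qed.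

(* The fibre is closed, hence compact, and covered by finitely many open sets
   on which iter j T is injective. *)
Lemma finite_iter_fibre j z : hausdorff_space X -> local_homeomorphism T ->
  compact [set: X] -> finite_set [set y | iter j T y = z].
Proof.
move=> hX lhT cX; pose S := [set y | iter j T y = z].
have cS : closed S.
  rewrite -[S]setCK closedC openE => y /= nS.
  have [Wa [Wb [oWa oWb Wa1 Wb1 dis]]] := hausdorff_open_disjoint hX nS.
  apply: (@filterS _ _ _ (iter j T @^-1` Wa)).
    by move=> y' Wy' /= e; apply: (dis z) => //; rewrite -e.
  by apply: open_nbhs_nbhs; split => //; exact: open_preimage_iter.
have /choice [W HW] := iter_locally_injective lhT j.
have [D [fD sDS cov]] : exists D, [/\ finite_set D, D `<=` S &
    S `<=` \bigcup_(p in D) W p].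
  apply: compact_finite_subcover; first exact: subclosed_compact cS cX _.
    by move=> p _; case: (HW p).
  by move=> p _; case: (HW p).
apply: (sub_finite_set (B := \bigcup_(p in D) (W p `&` S))).
  by move=> y Sy; have [p Dp Wy] := cov y Sy; exists p.
apply: bigcup_finite => // p _.
have [[y [Wy Sy]]|ne] := pselect (W p `&` S !=set0); last first.
  by apply: (sub_finite_set (B := set0)) => // y' Wy'; apply: ne; exists y'.
apply: (sub_finite_set (B := [set y])); last exact: finite_set1.
move=> y' [Wy' Sy']; have [_ _ inj] := HW p.
by apply: inj; rewrite ?in_setE // Sy Sy'.
Qed.

End Dynamics.

Section TowerSubgroupoid.
Context {X : topologicalType} (T : X -> X).
Hypothesis hX : hausdorff_space X.
Hypothesis lhT : local_homeomorphism T.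
Hypothesis cX : compact [set: X].
Variables (d M : nat) (tw : nat -> set X).
Hypothesis dR : dimRok_le T d.
Hypothesis finSp : finite_set (Sp_l T).
Hypothesis TW : open_Rokhlin_tower T M.*2.+1 tw.

Local Notation N := M.*2.+1.
Local Notation G := (DRgroupoid T).

(* Arrows (x, k - l, y) from level k to level l whose endpoints, once brought
   down to the base of the tower, have merged within M further steps. *)
Definition tower_groupoid := [set g : X * int * X | exists k l,
  [/\ (k < N)%N, (l < N)%N, tw k (gr g) & tw l (gs g)] /\
  gdeg g = (k%:Z - l%:Z)%R /\ iter (k + M) T (gr g) = iter (l + M) T (gs g)].

Lemma tower_groupoid_sub : tower_groupoid `<=` G.
Proof.
move=> g [k [l [_ [dg eg]]]]; exists (k + M)%N, (l + M)%N.
by split => //; rewrite dg; lia.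
Qed.

Lemma tower_groupoid_comp x a y b z : tower_groupoid (x, a, y) ->
  tower_groupoid (y, b, z) -> tower_groupoid (x, (a + b)%R, z).
Proof.
move=> [k [l [[kN lN tk tl] [da ea]]]] [k' [l' [[kN' lN' tk' tl'] [db eb]]]].
rewrite /gr /gs /gdeg /= in tk tl da ea tk' tl' db eb.
have lk : l = k' by apply: (Rokhlin_tower_level_unique TW lN kN' tl tk').
subst k'; exists k, l'; split; first by split.
by rewrite /gdeg /gr /gs /=; split; [rewrite da db; lia | rewrite ea eb].
Qed.

Lemma tower_groupoid_inv x a y :
  tower_groupoid (x, a, y) -> tower_groupoid (y, (- a)%R, x).
Proof.
move=> [k [l [[kN lN tk tl] [da ea]]]].
rewrite /gr /gs /gdeg /= in tk tl da ea.
exists l, k; split; first by split.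
by rewrite /gdeg /gr /gs /=; split; [rewrite da; lia | rewrite ea].
Qed.

Lemma tower_groupoid_refl x k : (k < N)%N -> tw k x -> tower_groupoid (x, 0%R, x).
Proof.
move=> kN tk; exists k, k; split; first by split.
by rewrite /gdeg /=; split => //; rewrite subrr.
Qed.

Definition branch_visitors := [set x | (exists2 k, (k < N)%N & tw k x) /\
  exists2 c, (c <= M)%N & Sp_l T (iter c T x)].

Definition branch_relatives := [set y | exists x a b,
  [/\ branch_visitors x, (a <= M)%N, (b <= M)%N & iter a T x = iter b T y]].

Definition exceptional_points :=
  [set z | exists c y, branch_relatives y /\ tower_groupoid (z, c, y)].

Definition tower_subgroupoid := tower_groupoid `|`
  [set g | G g /\ exceptional_points (gr g) /\ exceptional_points (gs g)].

Lemma exceptional_points_saturated x c y :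
  tower_groupoid (x, c, y) -> exceptional_points y -> exceptional_points x.
Proof.
move=> L [c' [y0 [Ry0 L']]]; exists (c + c')%R, y0; split => //.
exact: tower_groupoid_comp L L'.
Qed.

Lemma exceptional_points_relative z j : (j < N)%N -> tw j z ->
  branch_relatives z -> exceptional_points z.
Proof. by move=> jN tj Rz; exists 0%R, z; split => //; apply: tower_groupoid_refl tj. Qed.

Lemma subgroupoid_tower_subgroupoid : subgroupoid T tower_subgroupoid.
Proof.
split.
- by move=> g [/tower_groupoid_sub|[]].
- move=> x k y l z [L1|[G1 [R1x R1y]]] [L2|[G2 [R2y R2z]]].
  + by left; apply: tower_groupoid_comp L1 L2.
  + right; split; first exact: DRgroupoid_comp (tower_groupoid_sub L1) G2.
    by split => //=; apply: exceptional_points_saturated L1 _.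
  + right; split; first exact: DRgroupoid_comp G1 (tower_groupoid_sub L2).
    by split => //=; apply: exceptional_points_saturated (tower_groupoid_inv L2) _.
  + by right; split; [exact: DRgroupoid_comp G1 G2 | split].
- move=> x k y [L|[G1 [R1 R2]]]; first by left; apply: tower_groupoid_inv.
  by right; split; [exact: DRgroupoid_inv | split].
Qed.

Lemma finite_branch_visitors : finite_set branch_visitors.
Proof.
apply: (sub_finite_set (B := \bigcup_(c in `I_M.+1) \bigcup_(s in Sp_l T)
   [set x | iter c T x = s])).
  by move=> x [_ [c cM Sc]]; exists c => //=; exists (iter c T x).
apply: bigcup_finite; first exact: finite_II.
by move=> c _; apply: bigcup_finite => // s _; exact: finite_iter_fibre.
Qed.

Lemma finite_branch_relatives : finite_set branch_relatives.
Proof.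
apply: (sub_finite_set (B := \bigcup_(x in branch_visitors)
   \bigcup_(ab in `I_M.+1 `*` `I_M.+1) [set y | iter ab.2 T y = iter ab.1 T x])).
  move=> y [x [a [b [Fx aM bM e]]]]; exists x => //; exists (a, b).
    by split => /=; rewrite ltnS.
  by rewrite /= e.
apply: bigcup_finite; first exact: finite_branch_visitors.
move=> x _; apply: bigcup_finite; first by apply: finite_setX; exact: finite_II.
by move=> ab _; exact: finite_iter_fibre.
Qed.

Lemma finite_exceptional_points : finite_set exceptional_points.
Proof.
apply: (sub_finite_set (B := \bigcup_(y in branch_relatives)
   \bigcup_(kl in `I_N `*` `I_N) [set z | iter (kl.1 + M) T z = iter (kl.2 + M) T y])).
  by move=> z [c [y [Ry [k [l [[kN lN _ _] [_ e]]]]]]]; exists y => //; exists (k, l).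
apply: bigcup_finite; first exact: finite_branch_relatives.
move=> y _; apply: bigcup_finite; first by apply: finite_setX; exact: finite_II.
by move=> kl _; exact: finite_iter_fibre.
Qed.

(* Finite because the lag of an arrow is determined by its endpoints. *)
Lemma finite_exceptional_arrows : finite_set
  [set g | G g /\ exceptional_points (gr g) /\ exceptional_points (gs g)].
Proof.
have /choice [lag Hlag] : forall p : X * X, exists c : int,
    (exists c', G (p.1, c', p.2)) -> G (p.1, c, p.2).
  move=> p; have [[c' Gc]|nn] := pselect (exists c', G (p.1, c', p.2)).
    by exists c'.
  by exists 0%R => h; exfalso; apply: nn.
apply: (sub_finite_set (B := (fun p : X * X => (p.1, lag p, p.2)) @`
   (exceptional_points `*` exceptional_points))); last first.
  by apply: finite_image; apply: finite_setX; exact: finite_exceptional_points.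
move=> [[x c] y] [Gg [Rx Ry]]; exists (x, y) => //=.
have Gd : G (x, lag (x, y), y) by apply: (Hlag (x, y)); exists c.
by rewrite (DRgroupoid_lag_unique dR Gd Gg).
Qed.

Lemma Grelcompact_tower_subgroupoid : Grelcompact T tower_subgroupoid.
Proof.
have /choice [mn Hmn] : forall g : X * int * X, exists mn : nat * nat, G g ->
    DRbasic T [set gr g] mn.1 mn.2 [set gs g] g.
  move=> g; have [[m [n [e1 e2]]]|nG] := pselect (G g); last by exists (0, 0)%N.
  by exists (m, n) => _; split.
apply: (Grelcompact_sub (C := \bigcup_(kl in `I_N `*` `I_N)
    DRbasic T (closure (tw kl.1)) (kl.1 + M) (kl.2 + M) (closure (tw kl.2)) `|`
  \bigcup_(g in [set g | G g /\ exceptional_points (gr g) /\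
    exceptional_points (gs g)]) DRbasic T [set gr g] (mn g).1 (mn g).2 [set gs g])).
  have basic A B m n : closed A -> closed B -> Gcompact_closed T (DRbasic T A m n B).
    by move=> cA cB; split; [exact: Gcompact_DRbasic | exact: Gclosed_DRbasic].
  have closed1 (x : X) : closed [set x].
    exact: accessible_closed_set1 (hausdorff_accessible hX) x.
  apply: (Gcompact_closedU lhT); apply: (Gcompact_closed_bigcup lhT).
  - by apply: finite_setX; exact: finite_II.
  - by move=> kl _; apply: basic; exact: closed_closure.
  - exact: finite_exceptional_arrows.
  - by move=> g _; apply: basic.
move=> g [[k [l [[kN lN tk tl] [dg eg]]]]|Eg]; last by right; exists g => //; exact: Hmn Eg.1.
left; exists (k, l); first by split.
by split => /=; [exact: subset_closure | exact: subset_closure | rewrite dg; lia | ].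
Qed.

Lemma tower_iter_down k a x : (a <= k)%N -> (k < N)%N -> tw k x -> tw (k - a) (iter a T x).
Proof.
move=> ak kN tk; apply/(Rokhlin_tower_iter x TW); rewrite subnK //.
Qed.

Lemma tower_iter_up k a x : (k + a < N)%N -> tw k (iter a T x) -> tw (k + a) x.
Proof. by move=> h /(Rokhlin_tower_iter x TW h). Qed.

Lemma upper_arrow_in_tower_groupoid g a b k l : (a <= M)%N -> (b <= M)%N ->
  gdeg g = (a%:Z - b%:Z)%R -> iter a T (gr g) = iter b T (gs g) ->
  (M <= k < N)%N -> (M <= l < N)%N -> tw k (gr g) -> tw l (gs g) ->
  tower_groupoid g.
Proof.
move=> aM bM dg eg /andP [Mk kN] /andP [Ml lN] tk tl.
have := tower_iter_down (ltac:(lia) : (a <= k)%N) kN tk; rewrite eg => ta.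
have tb := tower_iter_down (ltac:(lia) : (b <= l)%N) lN tl.
have kl : (k - a = l - b)%N by apply: (Rokhlin_tower_level_unique TW _ _ ta tb); lia.
exists k, l; split; first by split.
split; first by rewrite dg; lia.
have -> : (k + M = (k - a + M) + a)%N by lia.
by rewrite iterD eg -iterD; congr iter; lia.
Qed.

Lemma lower_arrow_level_shift x y k l a b : (k <= M)%N -> (l <= M)%N ->
  (a <= k)%N -> (b <= M)%N -> tw k x -> tw l y -> iter a T x = iter b T y ->
  l = (k - a + b)%N /\ iter (k + M) T x = iter (l + M) T y.
Proof.
move=> kM lM ak bM tk tl e.
have := tower_iter_down ak (ltac:(lia) : (k < N)%N) tk; rewrite e => t1.
have t2 := tower_iter_up (ltac:(lia) : (k - a + b < N)%N) t1.
have ll : l = (k - a + b)%N by apply: (Rokhlin_tower_level_unique TW _ _ tl t2); lia.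
split => //; have -> : (k + M = (k - a + M) + a)%N by lia.
by rewrite iterD e -iterD; congr iter; lia.
Qed.

(* Two base points whose orbits meet after different numbers of steps are
   distinct points identified by T^al, so T glues two points at some stage. *)
Lemma merge_through_branch_point w v al be : tw 0 w -> tw 0 v ->
  (be <= M)%N -> (al < be)%N -> iter al T w = iter be T v ->
  exists2 i, (i < al)%N & Sp_l T (T (iter i T w)).
Proof.
move=> t0w t0v bM ab e.
pose u := iter (be - al) T v.
have eu : iter al T u = iter be T v by rewrite /u -iterD subnKC // ltnW.
have wu : w <> u.
  move=> wu; rewrite wu in t0w.
  have := tower_iter_up (ltac:(lia) : (0 + (be - al) < N)%N) t0w; rewrite add0n => t1.
  by have := Rokhlin_tower_level_unique TW (ltn0Sn _) (ltac:(lia) : (be - al < N)%N) t0v t1; lia.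
have [i [ia ne ee]] := iter_first_collision (etrans e (esym eu)) wu.
by exists i => //; exists (iter i T w), (iter i T u).
Qed.

Lemma lower_arrow_exceptional x y k l a b : (k <= M)%N -> (l <= M)%N ->
  (a <= M)%N -> (b <= M)%N -> (k <= a)%N -> (l <= b)%N ->
  tw k x -> tw l y -> iter a T x = iter b T y -> (a - k < b - l)%N ->
  exceptional_points x /\ exceptional_points y.
Proof.
move=> kM lM aM bM ka lb tk tl e lt.
have kN : (k < N)%N by lia.
have lN : (l < N)%N by lia.
have t0w := tower_iter_down (leqnn k) kN tk; rewrite subnn in t0w.
have t0v := tower_iter_down (leqnn l) lN tl; rewrite subnn in t0v.
have E : iter (a - k) T (iter k T x) = iter (b - l) T (iter l T y).
  by rewrite -!iterD !subnK.
have [i ia Si] := merge_through_branch_point t0w t0v (ltac:(lia) : (b - l <= M)%N) lt E.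
have Fx : branch_visitors x.
  by split; [exists k | exists (i.+1 + k)%N; [lia | rewrite iterD]].
split; apply: exceptional_points_relative; [exact: kN | exact: tk | | exact: lN | exact: tl | ].
- by exists x, 0%N, 0%N.
- by exists x, a, b.
Qed.

Lemma lower_arrow_in_tower_subgroupoid g a b k l : (a <= M)%N -> (b <= M)%N ->
  gdeg g = (a%:Z - b%:Z)%R -> iter a T (gr g) = iter b T (gs g) ->
  (k <= M)%N -> (l <= M)%N -> tw k (gr g) -> tw l (gs g) -> tower_subgroupoid g.
Proof.
case: g => [[x c] y]; rewrite /gdeg /gr /gs /= => aM bM dg eg kM lM tk tl.
have Gg : G (x, c, y) by exists a, b.
have in_tower k' l' : (k' < N)%N -> (l' < N)%N -> (c = k'%:Z - l'%:Z)%R ->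
    iter (k' + M) T x = iter (l' + M) T y -> tw k' x -> tw l' y -> tower_subgroupoid (x, c, y).
  by move=> kN lN dc ec tk' tl'; left; exists k', l'.
have [ak|ka] := leqP a k.
  have [el ei] := lower_arrow_level_shift kM lM ak bM tk tl eg.
  by apply: (in_tower k l) => //; [lia | lia | rewrite dg el; lia].
have [bl|lb] := leqP b l.
  have [el ei] := lower_arrow_level_shift lM kM bl aM tl tk (esym eg).
  by apply: (in_tower k l) => //; [lia | lia | rewrite dg el; lia].
have [lt|gt|eq] := ltngtP (a - k) (b - l).
- have [Ex Ey] := lower_arrow_exceptional kM lM aM bM (ltnW ka) (ltnW lb) tk tl eg lt.
  by right.
- have [Ey Ex] := lower_arrow_exceptional lM kM bM aM (ltnW lb) (ltnW ka) tl tk (esym eg) gt.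
  by right.
apply: in_tower tk tl; [lia | lia | rewrite dg; lia | ].
have -> : (k + M = (M - (a - k)) + a)%N by lia.
by rewrite iterD eg -iterD; congr iter; lia.
Qed.

End TowerSubgroupoid.

Definition lag_bounded {X : topologicalType} (T : X -> X) M (K : set (X * int * X)) :=
  forall g, K g -> exists a b, [/\ (a <= M)%N, (b <= M)%N,
    gdeg g = (a%:Z - b%:Z)%R & iter a T (gr g) = iter b T (gs g)].

(* The closure of K is covered by the open sets Z(X, m, n, X). *)
Lemma Grelcompact_lag_bounded {X : topologicalType} (T : X -> X) K :
  K `<=` DRgroupoid T -> Grelcompact T K -> exists M, lag_bounded T M K.
Proof.
move=> sK [_ cCl].
have KCl : K `<=` Gclosure T K.
  by move=> g Kg; split; [exact: sK | move=> B _ Bg; exists g].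
have covCl : Gclosure T K `<=` \bigcup_(ab : nat * nat) DRbasic T setT ab.1 ab.2 setT.
  by move=> g [[m [n [e1 e2]]] _]; exists (m, n) => //; split.
have [D [/finite_seqP [s ->] covD]] := cCl _ _
  (fun ab => Gopen_DRbasic (T := T) (m := ab.1) (n := ab.2) openT openT) covCl.
exists (\max_(ab <- s) (ab.1 + ab.2))%N => g /KCl /covD [ab /= sab [_ _ e1 e2]].
have /= hab := leq_bigmax_seq (F := fun ab : nat * nat => (ab.1 + ab.2)%N) _ sab isT.
by exists ab.1, ab.2; split => //; apply: leq_trans hab; [exact: leq_addr | exact: leq_addl].
Qed.

Section TowerHalves.
Context {X : topologicalType} (T : X -> X) (tow : nat -> nat -> set X) (p M : nat).
Hypothesis TW : forall j, (j < p)%N -> open_Rokhlin_tower T M.*2.+1 (tow j).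

(* Index 2j+1 is the lower half (levels <= M) of the j-th tower, index 2j its
   upper half (levels >= M); the two halves share level M. *)
Definition tower_halves i : set X :=
  if (i./2 < p)%N then
    if odd i then \bigcup_(k in [set k | (k <= M)%N]) tow i./2 k
    else \bigcup_(k in [set k | (M <= k < M.*2.+1)%N]) tow i./2 k
  else set0.

Lemma open_tower_halves i : open (tower_halves i).
Proof.
rewrite /tower_halves; case: ifP => ip; last exact: open0.
have [op _ _] := TW ip.
by case: ifP => _; apply: bigcup_open => k /= hk; apply: (op k _).1; lia.
Qed.

Lemma tower_halves_cover x :
  (exists j k, [/\ (j < p)%N, (k < M.*2.+1)%N & tow j k x]) ->
  exists i, (i < p.*2)%N /\ tower_halves i x.
Proof.
move=> [j [k [jp kN tk]]]; rewrite /tower_halves.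
have [kM|Mk] := leqP k M.
  exists j.*2.+1; split; first by lia.
  by rewrite /= uphalf_double odd_double jp; exists k.
exists j.*2; split; first by lia.
by rewrite doubleK odd_double jp; exists k => //=; rewrite (ltnW Mk).
Qed.

Lemma tower_halves_subgroupoid i K : hausdorff_space X ->
  local_homeomorphism T -> compact [set: X] -> finite_set (Sp_l T) ->
  forall d, dimRok_le T d -> lag_bounded T M K ->
  exists H, [/\ subgroupoid T H, Grelcompact T H &
    [set g | K g /\ tower_halves i (gs g) /\ tower_halves i (gr g)] `<=` H].
Proof.
move=> hX lhT cX finSp d dR HM; rewrite /tower_halves.
have [ip|pi] := ltnP i./2 p; last first.
  exists set0; split => [||g [_ []]//].
  - by split => // [x k y l z []|x k y []].
  - by apply: (Grelcompact_sub (C := set0)) => //; split; [exact: Gcompact0 | exact: Gclosed0].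
exists (tower_subgroupoid T M (tow i./2)); split.
- exact: subgroupoid_tower_subgroupoid (TW ip).
- exact: Grelcompact_tower_subgroupoid dR finSp.
move=> g [Kg [Ug Ur]]; have [a [b [aM bM dg eg]]] := HM g Kg.
move: Ug Ur; case: ifP => _ [l hl tl] [k hk tk].
  by have := lower_arrow_in_tower_subgroupoid (TW ip) aM bM dg eg hk hl tk tl.
by left; have := upper_arrow_in_tower_groupoid (TW ip) aM bM dg eg hk hl tk tl.
Qed.

End TowerHalves.

Theorem theorem5p12 (R : realType) (X : pseudoMetricType R)
  (T : X -> X) :
  hausdorff_space X -> compact [set: X] ->
  (forall y : X, exists x : X, T x = y) -> local_homeomorphism T ->
  finite_set (Sp_l T) -> (forall x, Sp_l T x -> open [set x]) ->
  forall d : nat, dimRok_le T d -> dad_le T (2 * d).+1.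
Proof.
(* Neither surjectivity nor isolatedness of the branch points is needed. *)
move=> hX cX _ lhT finSp _ d dR K sK _ rK.
have [M HM] := Grelcompact_lag_bounded sK rK.
have [p [tow [pd tws cv]]] := dR M.*2.+1 isT.
exists (tower_halves tow p M); split => [i _|x _|i _].
- exact: open_tower_halves tws i.
- by have [i [ip Ux]] := tower_halves_cover (cv x); exists i; split => //; lia.
- exact: tower_halves_subgroupoid tws i K hX lhT cX finSp d dR HM.
Qed.
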